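(* Let $(X_j,Y_j,S_j)$, $j\in\mathbb{Z}$, be a FAIM process, and let $\Delta H_n=H_n-\hat H_n$. Then $\lim_{n\to\infty}\mathbb{E}[\Delta H_n]=0$.
   Context: FAIM process: $(X_j,Y_j,S_j)$, $j\in\mathbb{Z}$, is strictly stationary, $X_j\in\{0,1\}$, $Y_j$ takes values in a finite alphabet, $S_j$ in a finite set $\mathcal{S}$; the conditional law $P_{X_j,Y_j,S_j|S_{j-1}}$ does not depend on $j$; and conditioned on $S_{j-1}$, $\{X_k,Y_k,S_k\}_{k\ge j}$ is independent of $\{X_l,Y_l,S_{l-1}\}_{l<j}$. The state sequence $(S_j)$ is a homogeneous, finite-state, stationary, aperiodic and irreducible Markov chain. Polarization setup: $N=2^n$, $G_N=B_NG_2^{\otimes n}$ with $G_2=\begin{bmatrix}1&0\\1&1\end{bmatrix}$ and $B_N$ the bit-reversal permutation matrix (arithmetic mod 2); $U_1^N=X_1^NG_N$, $Q_i=(U_1^{i-1},Y_1^N)$; $B_1,B_2,\dots$ i.i.d. Bernoulli$(1/2)$ and $i-1=\sum_{j=1}^nB_j2^{n-j}$. With $H(\cdot|\cdot)$ the conditional entropy in bits, $H_n=H(U_i|Q_i)$ and $\hat H_n=H(U_i|Q_i,S_N,S_0)$. *)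

From HB Require Import structures.
From mathcomp Require Import all_boot all_order all_algebra.
From mathcomp Require Import all_classical all_reals all_analysis.

Set Implicit Arguments.
Unset Strict Implicit.
Unset Printing Implicit Defensive.

Import Order.TTheory GRing.Theory Num.Theory.
Local Open Scope classical_set_scope.
Local Open Scope ring_scope.

Section Entropy.
Context {R : realType} {d : measure_display} {T : measurableType d}.
Variable P : probability T R.

Definition prob (E : set T) : R := fine (P E).

Definition pmf {V : finType} (Z : T -> V) (v : V) : R :=
  prob [set w | Z w = v].

Definition log2 (x : R) : R := ln x / ln 2.

(* H(Z) = - sum_v p(v) log2 p(v)   (ln 0 = 0, so 0 log 0 = 0) *)
Definition entropy {V : finType} (Z : T -> V) : R :=
  - \sum_(v : V) pmf Z v * log2 (pmf Z v).

Definition centropy {V W : finType} (U : T -> V) (Q : T -> W) : R :=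
  entropy (fun w => (U w, Q w)) - entropy Q.

End Entropy.

Section FAIM.
Context {R : realType} {d : measure_display} {T : measurableType d}.
Variable P : probability T R.
Variables (A St : finType).
Variables (X : int -> T -> bool) (Y : int -> T -> A) (S : int -> T -> St).

Definition Zt (j : int) (w : T) : bool * A * St := (X j w, Y j w, S j w).

Definition window (a : int) (m : nat) (w : T) : {ffun 'I_m -> bool * A * St} :=
  [ffun i : 'I_m => Zt (a + (i : nat)%:Z) w].

Definition past_window (j : int) (p : nat) (w : T) : {ffun 'I_p -> bool * A * St} :=
  [ffun i : 'I_p => (X (j - 1 - (i : nat)%:Z) w, Y (j - 1 - (i : nat)%:Z) w,
                     S (j - 2 - (i : nat)%:Z) w)].

Definition trans (s t : St) : R :=
  prob P [set w | S 0 w = s /\ S 1 w = t] / prob P [set w | S 0 w = s].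

Fixpoint trans_pow (k : nat) (s t : St) : R :=
  match k with
  | 0 => if s == t then 1 else 0
  | k.+1 => \sum_(u : St) trans_pow k s u * trans u t
  end.

Definition chain_irreducible : Prop :=
  forall s t : St, exists k : nat, (0 < k)%N /\ 0 < trans_pow k s t.

(* the period of every state (gcd of its return times) is 1 *)
Definition chain_aperiodic : Prop :=
  forall (s : St) (dd : nat),
    (forall k : nat, (0 < k)%N -> 0 < trans_pow k s s -> (dd %| k)%N) -> dd = 1%N.

Record FAIM : Prop := {
  FAIM_meas_X : forall j x, measurable [set w | X j w = x];
  FAIM_meas_Y : forall j y, measurable [set w | Y j w = y];
  FAIM_meas_S : forall j s, measurable [set w | S j w = s];
  (* strict stationarity (all finite-dimensional distributions are
     shift invariant; contiguous windows suffice) *)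
  FAIM_stationary : forall (a : int) (m : nat) (z : {ffun 'I_m -> bool * A * St}),
      prob P [set w | window a m w = z] = prob P [set w | window 0 m w = z];
  (* P_{X_j,Y_j,S_j | S_{j-1}} does not depend on j (cross-multiplied form) *)
  FAIM_time_invariant : forall (j : int) (z : bool * A * St) (s : St),
      prob P [set w | Zt j w = z /\ S (j - 1) w = s] * prob P [set w | S 0 w = s]
      = prob P [set w | Zt 1 w = z /\ S 0 w = s] * prob P [set w | S (j - 1) w = s];
  (* given S_{j-1}, {X_k,Y_k,S_k}_{k>=j} is independent of
     {X_l,Y_l,S_{l-1}}_{l<j} (all finite subfamilies) *)
  FAIM_cond_indep : forall (j : int) (m p : nat)
      (f : {ffun 'I_m -> bool * A * St}) (g : {ffun 'I_p -> bool * A * St}) (s : St),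
      prob P [set w | window j m w = f /\ past_window j p w = g /\ S (j - 1) w = s]
        * prob P [set w | S (j - 1) w = s]
      = prob P [set w | window j m w = f /\ S (j - 1) w = s]
        * prob P [set w | past_window j p w = g /\ S (j - 1) w = s];
  FAIM_irreducible : chain_irreducible;
  FAIM_aperiodic : chain_aperiodic
}.

End FAIM.

Definition G2 : 'M['F_2]_2 :=
  \matrix_(i < 2, j < 2) (if ((i : nat) == 0%N) && ((j : nat) == 1%N) then 0 else 1).

(* entries of the Kronecker power G_2^{(x)n}, big-endian indices:
   (G_2 (x) M)_{i,j} = G_2(i / 2^n, j / 2^n) * M(i mod 2^n, j mod 2^n) *)
Fixpoint kron_pow_entry (n i j : nat) : 'F_2 :=
  match n with
  | 0 => if (i == 0%N) && (j == 0%N) then 1 else 0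
  | n'.+1 =>
      (if ((i %/ 2 ^ n')%N == 0%N) && ((j %/ 2 ^ n')%N == 1%N) then 0 else 1)
      * kron_pow_entry n' (i %% 2 ^ n')%N (j %% 2 ^ n')%N
  end.

Definition G2_kron (n : nat) : 'M['F_2]_(2 ^ n) :=
  \matrix_(i < 2 ^ n, j < 2 ^ n) kron_pow_entry n i j.

Definition bitrev (n i : nat) : nat :=
  (\sum_(k < n) (odd (i %/ 2 ^ k)) * 2 ^ (n.-1 - k))%N.

Definition B_perm (n : nat) : 'M['F_2]_(2 ^ n) :=
  \matrix_(i < 2 ^ n, j < 2 ^ n) (if (j : nat) == bitrev n i then 1 else 0).

Definition G_N (n : nat) : 'M['F_2]_(2 ^ n) := B_perm n *m G2_kron n.

Section Polar.
Context {R : realType} {d : measure_display} {T : measurableType d}.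
Variable P : probability T R.
Variables (A St : finType).
Variables (X : int -> T -> bool) (Y : int -> T -> A) (S : int -> T -> St).
Variable n : nat.

(* X_1^N as a row vector (entry k is X_{k+1}) *)
Definition Xvec (w : T) : 'rV['F_2]_(2 ^ n) :=
  \row_(k < 2 ^ n) ((X (k.+1 : nat)%:Z w : nat)%:R : 'F_2).

Definition Uvec (w : T) : 'rV['F_2]_(2 ^ n) := Xvec w *m G_N n.

(* U_i for i = k+1 *)
Definition Ui (k : 'I_(2 ^ n)) (w : T) : 'F_2 := Uvec w 0 k.

Definition Yvec (w : T) : {ffun 'I_(2 ^ n) -> A} :=
  [ffun k : 'I_(2 ^ n) => Y (k.+1 : nat)%:Z w].

(* Q_i = (U_1^{i-1}, Y_1^N) for i = k+1; U_1^{i-1} is encoded injectively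
   as the length-N vector whose entries of index >= i-1 are set to 0 *)
Definition Qi (k : 'I_(2 ^ n)) (w : T) : {ffun 'I_(2 ^ n) -> 'F_2} * {ffun 'I_(2 ^ n) -> A} :=
  ([ffun l : 'I_(2 ^ n) => if (l < k)%N then Uvec w 0 l else 0], Yvec w).

Definition Hn_at (k : 'I_(2 ^ n)) : R := centropy P (Ui k) (Qi k).
Definition hatHn_at (k : 'I_(2 ^ n)) : R :=
  centropy P (Ui k) (fun w => (Qi k w, S (2 ^ n)%N%:Z w, S 0 w)).

(* E[Delta H_n], with i uniform on {1,...,N} (B_1..B_n i.i.d. Bernoulli(1/2)) *)
Definition E_DeltaH : R :=
  (2 ^ n)%:R^-1 * \sum_(k < 2 ^ n) (Hn_at k - hatHn_at k).

End Polar.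

From Pilot Require Import Defs.
From HB Require Import structures.
From mathcomp Require Import all_boot all_order all_algebra.
From mathcomp Require Import all_classical all_reals all_analysis.
From mathcomp Require Import ring lra.

(* Write Q^(m) = (U_1^m, Y_1^N), so that Q_i = Q^(i-1) and (U_i, Q_i) is a
   relabelling of Q^(i).  By the chain rule H(U_i | Q_i) = H(Q^(i)) - H(Q^(i-1)),
   and likewise with (S_N, S_0) adjoined to every conditioning variable.  Summing
   over i telescopes: N E[Delta H_n] = D(0) - D(N) with D(m) = H(S_N, S_0 | Q^(m)),
   and 0 <= D(m) <= |S|^2 / ln 2, so E[Delta H_n] = O(2^-n).  Of the FAIM
   assumptions only the measurability of the coordinates is used. *)

Import Order.TTheory GRing.Theory Num.Theory.
Import numFieldNormedType.Exports.
Local Open Scope classical_set_scope.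
Local Open Scope ring_scope.

Lemma ln_ratio_bounds {R : realType} {p q : R} :
  0 <= q -> q <= p -> 0 <= q * (ln p - ln q) <= p.
Proof.
move=> q_ge0 qp; have [->|q_gt0] := eqVneq q 0.
  by rewrite mul0r lexx (le_trans q_ge0 qp).
have {q_gt0} q_gt0 : 0 < q by rewrite lt_def q_gt0.
have p_gt0 : 0 < p := lt_le_trans q_gt0 qp.
rewrite -lnV ?posrE // -lnM ?posrE ?invr_gt0 //.
have ratio_ge1 : 1 <= p / q by rewrite ler_pdivlMr // mul1r.
rewrite mulr_ge0 ?ln_ge0 //=.
have := ln_sublinear (lt_le_trans ltr01 ratio_ge1).
by rewrite -(ltr_pM2l q_gt0) mulrCA divff ?mulr1 ?gt_eqF // => /ltW.
Qed.

Section FiniteRandomVariables.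
Context {R : realType} {d : measure_display} {T : measurableType d}.
Variable P : probability T R.

Definition measurable_levels {V : finType} (F : T -> V) :=
  forall v, measurable [set w | F w = v].

Lemma prob_ge0 E : 0 <= prob P E.
Proof. exact/fine_ge0/measure_ge0. Qed.

Lemma prob0 : prob P set0 = 0.
Proof. by rewrite /prob measure0. Qed.

Lemma probT : prob P setT = 1.
Proof. by rewrite /prob probability_setT. Qed.

Lemma probU E F : measurable E -> measurable F -> E `&` F = set0 ->
  prob P (E `|` F) = prob P E + prob P F.
Proof. by move=> mE mF EF; rewrite /prob measureU// fineD// fin_num_measure. Qed.

Section Levels.
Context {I : finType} {F : T -> I}.
Hypothesis mF : measurable_levels F.

Lemma set_mem_cons (i : I) (s : seq I) :
  [set w | F w \in i :: s] = [set w | F w = i] `|` [set w | F w \in s].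
Proof.
apply/seteqP; split=> w /=; rewrite inE; first by case/orP=> [/eqP|]; [left|right].
by case=> [->|->]; rewrite ?eqxx ?orbT.
Qed.

Lemma measurable_levels_mem (s : seq I) : measurable [set w | F w \in s].
Proof.
elim: s => [|i s IH]; last by rewrite set_mem_cons; exact: measurableU.
by rewrite (_ : [set w | _] = set0) //; apply/seteqP; split.
Qed.

Lemma prob_partition_seq {E : set T} (s : seq I) : measurable E -> uniq s ->
  \sum_(i <- s) prob P (E `&` [set w | F w = i]) = prob P (E `&` [set w | F w \in s]).
Proof.
move=> mE; elim: s => [|i s IH] /=.
  by rewrite big_nil (_ : _ `&` _ = set0) ?prob0 //; apply/seteqP; split=> w [].
case/andP=> i_notin_s uniq_s; rewrite big_cons IH // set_mem_cons setIUr probU //.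
- exact: measurableI (mF i).
- exact/measurableI/measurable_levels_mem.
- apply/seteqP; split=> w //= [[_ Fwi] [_ Fw_in_s]].
  by move: i_notin_s; rewrite -Fwi Fw_in_s.
Qed.

Lemma prob_partition {E : set T} : measurable E ->
  \sum_(i : I) prob P (E `&` [set w | F w = i]) = prob P E.
Proof.
move=> mE; rewrite -big_enum prob_partition_seq ?enum_uniq //.
by congr (prob P _); apply/seteqP; split=> w /= => [[]|Ew]; rewrite ?mem_enum.
Qed.

Lemma sum_pmf : \sum_(i : I) Defs.pmf P F i = 1.
Proof.
rewrite -probT -(prob_partition measurableT).
by apply: eq_bigr => i _; rewrite setTI.
Qed.

End Levels.

Lemma measurable_levels_comp {V W : finType} {F : T -> V} (h : V -> W) :
  measurable_levels F -> measurable_levels (h \o F).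
Proof.
move=> mF u; rewrite (_ : [set w | _] = [set w | F w \in enum [pred v | h v == u]]).
  exact: measurable_levels_mem.
by apply/seteqP; split=> w /=; rewrite mem_enum inE => /eqP.
Qed.

Lemma measurable_levels_pair (V W : finType) (F : T -> V) (G : T -> W) :
  measurable_levels F -> measurable_levels G ->
  measurable_levels (fun w => (F w, G w)).
Proof.
move=> mF mG [v u]; rewrite (_ : [set w | _] = [set w | F w = v] `&` [set w | G w = u]).
  exact: measurableI (mF v) (mG u).
by apply/seteqP; split=> w /= [-> ->].
Qed.

Lemma measurable_levels_ffun (I V : finType) (F : I -> T -> V) :
  (forall i, measurable_levels (F i)) -> measurable_levels (fun w => [ffun i => F i w]).
Proof.
move=> mF f.
have agree_on (s : seq I) : measurable [set w | forall i, i \in s -> F i w = f i].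
  elim: s => [|i s IH].
    by rewrite (_ : [set w | _] = setT) //; apply/seteqP; split.
  rewrite (_ : [set w | _] = [set w | F i w = f i] `&`
                             [set w | forall j, j \in s -> F j w = f j]).
    exact: measurableI (mF i (f i)) IH.
  apply/seteqP; split=> w /=.
    by move=> Fw; split=> [|j js]; apply: Fw; rewrite inE ?eqxx ?js ?orbT.
  by case=> Fiw Fsw j; rewrite inE => /orP[/eqP->|/Fsw].
rewrite (_ : [set w | _] = [set w | forall i, i \in enum I -> F i w = f i]) //.
apply/seteqP; split=> w /= => [<- i _|Fw]; first by rewrite ffunE.
by apply/ffunP=> i; rewrite ffunE Fw ?mem_enum.
Qed.

Lemma entropy_relabel {V W : finType} {Z : T -> V} {Z' : T -> W}
    {f : V -> W} {g : W -> V} :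
  (forall w, Z' w = f (Z w)) -> (forall w, Z w = g (Z' w)) ->
  entropy P Z = entropy P Z'.
Proof.
move=> Z'E ZE.
pose term (V' : finType) (Z0 : T -> V') (v : V') :=
  Defs.pmf P Z0 v * log2 (Defs.pmf P Z0 v).
have off_range (V' W' : finType) (Z0 : T -> V') (Z1 : T -> W') f' g' :
    (forall w, Z1 w = f' (Z0 w)) -> (forall w, Z0 w = g' (Z1 w)) ->
    \sum_v term V' Z0 v = \sum_(v | g' (f' v) == v) term V' Z0 v.
  move=> Z1E Z0E; rewrite [LHS](bigID (fun v => g' (f' v) == v)) /=.
  rewrite [X in _ + X]big1 ?addr0 // => v /eqP gfv.
  rewrite /term /Defs.pmf (_ : [set w | _] = set0) ?prob0 ?mul0r //.
  by apply/seteqP; split=> w //= Z0w; apply: gfv; rewrite -Z0w -Z1E -Z0E.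
rewrite /entropy (off_range _ _ _ _ _ _ Z'E ZE) (off_range _ _ _ _ _ _ ZE Z'E).
rewrite (reindex_onto f g) /=; last by move=> u /eqP.
congr (- _); apply: eq_big => v.
  by case: (g (f v) =P v) => [->|]; rewrite ?eqxx ?andbF.
move=> /eqP gfv; rewrite /term /Defs.pmf; congr (prob P _ * log2 (prob P _));
  by apply/seteqP; split=> w /= => [<-|Z'w]; rewrite ?Z'E // ZE Z'w gfv.
Qed.

Lemma centropy_chain {V W W' : finType} {U : T -> V} {Q : T -> W} {Q' : T -> W'}
    {f : V * W -> W'} {g : W' -> V * W} :
  (forall w, Q' w = f (U w, Q w)) -> (forall w, (U w, Q w) = g (Q' w)) ->
  centropy P U Q = entropy P Q' - entropy P Q.
Proof. by move=> Q'E UQE; rewrite /centropy (entropy_relabel Q'E UQE). Qed.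

(* Cruder than log2 #|V|, but any constant suffices here. *)
Lemma centropy_bounds (V W : finType) (U : T -> V) (Q : T -> W) :
  measurable_levels U -> measurable_levels Q ->
  0 <= centropy P U Q <= #|V|%:R / ln 2.
Proof.
move=> mU mQ; pose p q := Defs.pmf P Q q.
pose r q u := Defs.pmf P (fun w => (U w, Q w)) (u, q).
have r_ge0 q u : 0 <= r q u by exact: prob_ge0.
have pE q : p q = \sum_u r q u.
  rewrite /p /Defs.pmf -(prob_partition mU (mQ q)); apply: eq_bigr => u _.
  by congr (prob P _); apply/seteqP; split=> w /= [-> ->].
have r_le_p q u : r q u <= p q by rewrite pE (bigD1 u) //= lerDl sumr_ge0.
have ln2_gt0 : 0 < ln (2 : R) by rewrite ln_gt0 // ltr1n.
have -> : centropy P U Q = \sum_q \sum_u r q u * (ln (p q) - ln (r q u)) / ln 2.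
  have pairE : \sum_(v : V * W) Defs.pmf P (fun w => (U w, Q w)) v *
                  log2 (Defs.pmf P (fun w => (U w, Q w)) v) =
               \sum_q \sum_u r q u * log2 (r q u).
    by rewrite exchange_big pair_bigA; apply: eq_bigr => -[].
  rewrite /centropy /entropy opprK addrC pairE -sumrB.
  apply: eq_bigr => q _; rewrite -/(p q) {1}pE mulr_suml -sumrB.
  apply: eq_bigr => u _; rewrite /log2 -/(r q u); ring.
have term_bounds q u : 0 <= r q u * (ln (p q) - ln (r q u)) / ln 2 <= p q / ln 2.
  have /andP[lo hi] := ln_ratio_bounds (r_ge0 q u) (r_le_p q u).
  by rewrite divr_ge0 ?(ltW ln2_gt0) //= ler_pM2r ?invr_gt0.
apply/andP; split.
  by apply: sumr_ge0 => q _; apply: sumr_ge0 => u _; case/andP: (term_bounds q u).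
apply: (@le_trans _ _ (\sum_q \sum_(u : V) p q / ln 2)).
  by apply: ler_sum => q _; apply: ler_sum => u _; case/andP: (term_bounds q u).
under eq_bigr do rewrite sumr_const.
by rewrite sumrMnl -mulr_suml sum_pmf // mul1r mulr_natl.
Qed.

End FiniteRandomVariables.

Section PolarTelescope.
Context {R : realType} {d : measure_display} {T : measurableType d}.
Variable P : probability T R.
Variables (A St : finType).
Variables (X : int -> T -> bool) (Y : int -> T -> A) (S : int -> T -> St).
Hypothesis mX : forall j, measurable_levels (X j).
Hypothesis mY : forall j, measurable_levels (Y j).
Hypothesis mS : forall j, measurable_levels (S j).
Variable n : nat.

Local Notation N := (2 ^ n)%N.
Local Notation Qvec := ({ffun 'I_N -> 'F_2} * {ffun 'I_N -> A})%type.

(* Q^(m) of the header, encoded as in Qi, so that Qi k is convertible to Qprefix k. *)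
Definition Qprefix (m : nat) (w : T) : Qvec :=
  ([ffun l : 'I_N => if (l < m)%N then Uvec X n w 0 l else 0], Yvec Y n w).

Definition prefix_extend (k : 'I_N) (x : 'F_2 * Qvec) : Qvec :=
  ([ffun l : 'I_N => if (l : nat) == k then x.1 else x.2.1 l], x.2.2).

Definition prefix_split (k : 'I_N) (q : Qvec) : 'F_2 * Qvec :=
  (q.1 k, ([ffun l : 'I_N => if (l < k)%N then q.1 l else 0], q.2)).

Lemma prefix_extendE (k : 'I_N) w :
  prefix_extend k (Ui X k w, Qi X Y k w) = Qprefix k.+1 w.
Proof.
rewrite /prefix_extend /Qi /=; congr (_, _); apply/ffunP => l; rewrite !ffunE.
case: (ltngtP l k) => [lk|kl|lk].
- by rewrite ltnS ltnW.
- by rewrite ltnS leqNgt kl.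
- by rewrite lk ltnS leqnn; congr (Uvec X n w 0 _); apply: val_inj.
Qed.

Lemma prefix_splitE (k : 'I_N) w :
  prefix_split k (Qprefix k.+1 w) = (Ui X k w, Qi X Y k w).
Proof.
rewrite /prefix_split /= ffunE ltnS leqnn; congr (_, (_, _)).
by apply/ffunP => l; rewrite !ffunE; case: ifP => // /ltnW; rewrite -ltnS => ->.
Qed.

Lemma Hn_at_chain (k : 'I_N) :
  Hn_at P X Y k = entropy P (Qprefix k.+1) - entropy P (Qprefix k).
Proof.
exact: (centropy_chain P (fun w => esym (prefix_extendE k w))
                         (fun w => esym (prefix_splitE k w))).
Qed.

Definition end_states (w : T) : St * St := (S N%:Z w, S 0 w).

Lemma hatHn_at_chain (k : 'I_N) :
  hatHn_at P X Y S k =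
    entropy P (fun w => (Qprefix k.+1 w, S N%:Z w, S 0 w))
  - entropy P (fun w => (Qprefix k w, S N%:Z w, S 0 w)).
Proof.
apply: (centropy_chain P
  (f := fun x => (prefix_extend k (x.1, x.2.1.1), x.2.1.2, x.2.2))
  (g := fun y => ((prefix_split k y.1.1).1, ((prefix_split k y.1.1).2, y.1.2, y.2)))).
  by move=> w; rewrite /= prefix_extendE.
by move=> w; have /= [-> ->] := prefix_splitE k w.
Qed.

Lemma measurable_levels_Qprefix m : measurable_levels (Qprefix m).
Proof.
have mXvec : measurable_levels (Xvec X n).
  pose Xf w := [ffun k : 'I_N => ((X (k.+1 : nat)%:Z w : nat)%:R : 'F_2)].
  have mXf : measurable_levels Xf.
    apply: measurable_levels_ffun => k.
    exact: (measurable_levels_comp (fun b : bool => (b : nat)%:R : 'F_2) (mX _)).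
  have -> : Xvec X n = (fun f => \row_k f k) \o Xf.
    by apply/funext => w; apply/matrixP => i j; rewrite !mxE ffunE.
  exact: (measurable_levels_comp (fun f : {ffun 'I_N -> 'F_2} => \row_k f k) mXf).
apply: measurable_levels_pair; apply: measurable_levels_ffun => l //.
exact: (measurable_levels_comp
  (fun x => if (l < m)%N then (x *m G_N n) 0 l else 0) mXvec).
Qed.

Definition state_centropy (m : nat) : R := centropy P end_states (Qprefix m).

Lemma state_centropyE m : state_centropy m =
  entropy P (fun w => (Qprefix m w, S N%:Z w, S 0 w)) - entropy P (Qprefix m).
Proof.
rewrite /state_centropy /centropy; congr (_ - _).
by apply: (entropy_relabel P (f := fun x => (x.2, x.1.1, x.1.2))
                             (g := fun y => (y.1.2, y.2, y.1.1))).
Qed.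

Lemma state_centropy_bounds m : 0 <= state_centropy m <= #|{: St * St}|%:R / ln 2.
Proof.
apply: (centropy_bounds P); last exact: measurable_levels_Qprefix.
exact: measurable_levels_pair.
Qed.

Lemma E_DeltaH_telescope :
  E_DeltaH P X Y S n = N%:R^-1 * (state_centropy 0 - state_centropy N).
Proof.
pose H m := entropy P (Qprefix m).
pose Hs m := entropy P (fun w => (Qprefix m w, S N%:Z w, S 0 w)).
have sum_telescope (F : nat -> R) : \sum_(k < N) (F k.+1 - F k) = F N - F 0.
  by rewrite -(big_mkord xpredT (fun k => F k.+1 - F k)) telescope_sumr.
rewrite /E_DeltaH; congr (_ * _).
transitivity (\sum_(k < N) ((H k.+1 - H k) - (Hs k.+1 - Hs k))).
  by apply: eq_bigr => k _; rewrite Hn_at_chain hatHn_at_chain.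
by rewrite sumrB !sum_telescope !state_centropyE /H /Hs; ring.
Qed.

Lemma norm_E_DeltaH_le :
  `|E_DeltaH P X Y S n| <= #|{: St * St}|%:R / ln 2 * (2^-1) ^+ n.
Proof.
rewrite E_DeltaH_telescope exprVn -natrX normrM ger0_norm ?invr_ge0 // mulrC.
rewrite ler_pM2r ?invr_gt0 ?ltr0n ?expn_gt0 //.
have /andP[lo0 hi0] := state_centropy_bounds 0; have /andP[loN hiN] := state_centropy_bounds N.
by rewrite ler_norml; apply/andP; split; lra.
Qed.

End PolarTelescope.

Theorem lemma6 (R : realType) (d : measure_display) (T : measurableType d)
  (P : probability T R) (A St : finType)
  (X : int -> T -> bool) (Y : int -> T -> A) (S : int -> T -> St) :
  FAIM P X Y S ->
  (fun n : nat => E_DeltaH P X Y S n) @ \oo --> 0.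
Proof.
move=> hF; pose C : R := #|{: St * St}|%:R / ln 2.
have bounds n : - (C * (2^-1) ^+ n) <= E_DeltaH P X Y S n <= C * (2^-1) ^+ n.
  rewrite -ler_norml.
  exact: norm_E_DeltaH_le (FAIM_meas_X hF) (FAIM_meas_Y hF) (FAIM_meas_S hF) n.
have geometric : (fun n => C * (2^-1) ^+ n) @ \oo --> (0 : R).
  by apply: cvg_geometric; rewrite gtr0_norm ?invr_gt0 // invf_lt1 // ltr1n.
apply: (squeeze_cvgr _ _ geometric); first exact: nearW bounds.
by rewrite -oppr0; exact: cvgN.
Qed.
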